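(* Let $\mathcal U,\mathcal V,\mathcal X$ be real finite-dimensional Euclidean spaces, $\mathcal F:\mathcal X\to\mathcal U$ and $\mathcal G:\mathcal X\to\mathcal V$ linear maps, $\sigma>0$, $\Sigma_f$ a self-adjoint positive semidefinite linear operator on $\mathcal U$, and $\Sigma_g$ a self-adjoint positive semidefinite linear operator on $\mathcal V$. Let $\mathcal E_g$ be a self-adjoint positive definite linear operator on $\mathcal V$ with $\mathcal E_g\succeq \sigma^{-1}\Sigma_g+\mathcal G\mathcal G^*$, and set $\mathcal T_g:=\mathcal E_g-\sigma^{-1}\Sigma_g-\mathcal G\mathcal G^*\succeq 0$. Let $\mathcal T_f$ be a self-adjoint positive semidefinite linear operator on $\mathcal U$ and set $\widehat{\mathcal T}_f:=\mathcal T_f+\mathcal F\mathcal G^*\mathcal E_g^{-1}\mathcal G\mathcal F^*$. Let $\mathcal H:\mathcal X\to\mathcal U\times\mathcal V$, $\mathcal Hx=(\mathcal Fx,\mathcal Gx)$. Then $$\mathcal W:=\mathcal H\mathcal H^*+\sigma^{-1}\begin{pmatrix}\Sigma_f&0\\0&\Sigma_g\end{pmatrix}+\begin{pmatrix}\widehat{\mathcal T}_f&0\\0&\mathcal T_g\end{pmatrix}\succ 0 \iff \mathcal F\mathcal F^*+\sigma^{-1}\Sigma_f+\mathcal T_f\succ 0 .$$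
   Context: $\succ 0$ ($\succeq 0$) means positive definite (semidefinite) for self-adjoint operators; $\mathcal A\succeq\mathcal B$ means $\mathcal A-\mathcal B\succeq 0$. In the paper, $\Sigma_f$ is the operator with $\langle \xi-\tilde\xi,u-\tilde u\rangle\ge\|u-\tilde u\|^2_{\Sigma_f}$ for all $u,\tilde u\in\mathrm{dom} f$, $\xi\in\partial f(u)$, $\tilde\xi\in\partial f(\tilde u)$ for a closed proper convex $f$, and $\Sigma_g$ is the Hessian of a convex quadratic $g(v)=\frac12\langle v,\Sigma_g v\rangle-\langle b,v\rangle$. *)

From HB Require Import structures.
From mathcomp Require Import all_boot all_order all_algebra.
Set Implicit Arguments. Unset Strict Implicit. Unset Printing Implicit Defensive.
Import Order.TTheory GRing.Theory Num.Theory.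
Local Open Scope ring_scope.

(* Finite-dimensional real Euclidean spaces are modelled as column vectors
   'cV[R]_k with the standard inner product <u,v> = u^T v; linear maps are
   matrices, adjoints are transposes. *)

Definition psd (R : realFieldType) (k : nat) (A : 'M[R]_k) : Prop :=
  A^T = A /\ forall u : 'cV[R]_k, 0 <= (u^T *m A *m u) 0 0.

Definition pd (R : realFieldType) (k : nat) (A : 'M[R]_k) : Prop :=
  A^T = A /\ forall u : 'cV[R]_k, u != 0 -> 0 < (u^T *m A *m u) 0 0.

Definition loewner_ge (R : realFieldType) (k : nat) (A B : 'M[R]_k) : Prop :=
  psd (A - B).

From HB Require Import structures.
From mathcomp Require Import all_boot all_order all_algebra.
Import Order.TTheory GRing.Theory Num.Theory.
Set Implicit Arguments. Unset Strict Implicit. Unset Printing Implicit Defensive.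
Local Open Scope ring_scope.

(* W is the symmetric block matrix with off-diagonal block
   F G^*, lower-right block E_g and upper-left block
   F F^* + sigma^-1 Sf + Tf + F G^* E_g^-1 G F^*; its Schur complement with
   respect to the positive definite block E_g is therefore exactly
   F F^* + sigma^-1 Sf + Tf.  Completing the square in the quadratic form of W
   shows that a symmetric block matrix with a positive definite lower-right
   block is positive definite iff its Schur complement is. *)

Lemma quad_block_mxE (R : comUnitRingType) (m n : nat)
    (A : 'M[R]_m) (B : 'M[R]_(m, n)) (D : 'M[R]_n)
    (u : 'cV[R]_m) (v : 'cV[R]_n) :
  D^T = D -> D \in unitmx ->
  (col_mx u v)^T *m block_mx A B B^T D *m col_mx u v
  = u^T *m (A - B *m invmx D *m B^T) *m u
    + (v + invmx D *m B^T *m u)^T *m D *m (v + invmx D *m B^T *m u).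
Proof.
move=> DT Du; set w := v + invmx D *m B^T *m u.
have wT : w^T = v^T + u^T *m B *m invmx D.
  by rewrite /w linearD /= !trmx_mul trmxK trmx_inv DT mulmxA.
have DDi k (X : 'M_(k, n)) : X *m D *m invmx D = X by rewrite -mulmxA mulmxV ?mulmx1.
have DiD k (X : 'M_(k, n)) : X *m invmx D *m D = X by rewrite -mulmxA mulVmx ?mulmx1.
rewrite wT tr_col_mx mul_row_block !mul_row_col /w.
rewrite !(mulmxDl, mulmxDr, mulmxN, mulNmx) !mulmxA !DDi !DiD.
set b := v^T *m B^T *m u; set c := u^T *m B *m v; set d := v^T *m D *m v.
set e := u^T *m B *m invmx D *m B^T *m u.
rewrite -!addrA; congr (_ + _).
by rewrite (addrC b e) (addrCA c e) (addrCA d e) addKr [d + _]addrC [c + b]addrC addrA.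
Qed.

Lemma pd_unitmx (R : realFieldType) (n : nat) (D : 'M[R]_n) : pd D -> D \in unitmx.
Proof.
case=> _ Dpos; rewrite unitmxE unitfE; apply/negP => /det0P [x x_neq0 xD0].
by have := Dpos x^T; rewrite trmx_eq0 x_neq0 trmxK xD0 mul0mx mxE ltxx => /(_ isT).
Qed.

Lemma pd_quad_ge0 (R : realFieldType) (n : nat) (D : 'M[R]_n) (v : 'cV[R]_n) :
  pd D -> 0 <= (v^T *m D *m v) 0 0.
Proof.
case=> _ Dpos; have [->|v_neq0] := eqVneq v 0; first by rewrite mulmx0 mxE.
exact/ltW/Dpos.
Qed.

Lemma tr_block_mx_sym (R : pzRingType) (m n : nat)
    (A : 'M[R]_m) (B : 'M[R]_(m, n)) (D : 'M[R]_n) :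
  D^T = D -> (block_mx A B B^T D)^T = block_mx A B B^T D <-> A^T = A.
Proof.
move=> DT; rewrite tr_block_mx trmxK DT.
by split=> [/eq_block_mx[] | ->].
Qed.

Lemma pd_block_schur (R : realFieldType) (m n : nat)
    (A : 'M[R]_m) (B : 'M[R]_(m, n)) (D : 'M[R]_n) :
  pd D -> pd (block_mx A B B^T D) <-> pd (A - B *m invmx D *m B^T).
Proof.
move=> Dpd; have Du := pd_unitmx Dpd; have [DT Dpos] := Dpd.
have quad u v := congr1 (fun M : 'M[R]_1 => M 0 0) (quad_block_mxE A B u v DT Du).
have symS : (A - B *m invmx D *m B^T)^T = A - B *m invmx D *m B^T <-> A^T = A.
  rewrite linearB /= !trmx_mul trmxK trmx_inv DT mulmxA.
  by split=> [/addIr | ->].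
have symW := tr_block_mx_sym A B DT.
split=> -[sym pos]; split.
- exact/symS/symW.
- move=> u u_neq0; pose v := - (invmx D *m B^T *m u).
  have := pos (col_mx u v); rewrite col_mx_eq0 negb_and u_neq0 => /(_ isT).
  by rewrite quad /v addNr trmx0 !mul0mx mxE [X in _ + X]mxE addr0.
- exact/symW/symS.
- move=> w w_neq0; rewrite -(vsubmxK w) quad mxE.
  have [u0|u_neq0] := eqVneq (usubmx w) 0.
    rewrite u0 trmx0 !mulmx0 addr0 [X in X + _]mxE add0r; apply: Dpos.
    by apply: contraNneq w_neq0 => v0; rewrite -(vsubmxK w) u0 v0 col_mx0.
  exact: ltr_wpDr (pd_quad_ge0 _ Dpd) (pos _ u_neq0).
Qed.

Theorem proposition2p1 (R : realFieldType) (m n p : nat)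
  (F : 'M[R]_(m, p)) (G : 'M[R]_(n, p)) (sigma : R)
  (Sf : 'M[R]_m) (Sg : 'M[R]_n) (Eg : 'M[R]_n) (Tf : 'M[R]_m) :
  0 < sigma ->
  psd Sf -> psd Sg ->
  pd Eg -> loewner_ge Eg (sigma^-1 *: Sg + G *m G^T) ->
  psd Tf ->
  let Tg := Eg - sigma^-1 *: Sg - G *m G^T in
  let hTf := Tf + F *m G^T *m invmx Eg *m G *m F^T in
  let H : 'M[R]_(m + n, p) := col_mx F G in
  let W : 'M[R]_(m + n) :=
    H *m H^T + sigma^-1 *: block_mx Sf 0 0 Sg + block_mx hTf 0 0 Tg in
  pd W <-> pd (F *m F^T + sigma^-1 *: Sf + Tf).
Proof.
move=> _ _ _ Eg_pd _ _ Tg hTf H W.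
set M := F *m F^T + sigma^-1 *: Sf + Tf; set B := F *m G^T.
have BT : B^T = G *m F^T by rewrite trmx_mul trmxK.
have -> : W = block_mx (M + B *m invmx Eg *m B^T) B B^T Eg.
  rewrite /W /H tr_col_mx mul_col_row scale_block_mx !add_block_mx BT.
  rewrite !scaler0 !addr0 /hTf /Tg /M /B !mulmxA addrA; congr block_mx.
  by rewrite addrC -addrA addKr subrK.
by have := pd_block_schur (M + B *m invmx Eg *m B^T) B Eg_pd; rewrite addrK.
Qed.
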